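(* Let $k,m\in\mathbb{N}$ with $m<k\le 2m$, $k$ even, and $\gcd(2k+1,2(2m+1))=1$. Let $J_\mu=\{1,\dots,\mu\}$ and define $I_{11}=\{s\in J_m: s=\frac{2n(2m+1)+k-m}{2k+1}\text{ for some }n\in J_{k/2}\}$, $I_{12}=\{s\in J_m: 2m+1-s=\frac{2n(2m+1)+k-m}{2k+1}\text{ for some }n\in\{k/2+1,\dots,k\}\}$, $I_{21}=\{s\in J_m: s=\frac{2n(2m+1)-(k-m)}{2k+1}\text{ for some }n\in J_{k/2}\}$, $I_{22}=\{s\in J_m: 2m+1-s=\frac{2n(2m+1)-(k-m)}{2k+1}\text{ for some }n\in\{k/2+1,\dots,k\}\}$. Then $I_{21}=\{m\}$ and $I_{11}=I_{12}=I_{22}=\emptyset$. *)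

From mathcomp Require Import all_boot all_order all_algebra.
Set Implicit Arguments. Unset Strict Implicit. Unset Printing Implicit Defensive.
Import Order.TTheory GRing.Theory Num.Theory.
Local Open Scope ring_scope.

Definition I11 (k m : nat) (s : nat) : Prop :=
  (1 <= s <= m)%N /\ exists n : nat, (1 <= n <= k %/ 2)%N /\
    (s%:R : rat) = ((2 * n * (2 * m + 1))%:R + k%:R - m%:R) / (2 * k + 1)%:R.

Definition I12 (k m : nat) (s : nat) : Prop :=
  (1 <= s <= m)%N /\ exists n : nat, (k %/ 2 + 1 <= n <= k)%N /\
    ((2 * m + 1)%:R - s%:R : rat) = ((2 * n * (2 * m + 1))%:R + k%:R - m%:R) / (2 * k + 1)%:R.

Definition I21 (k m : nat) (s : nat) : Prop :=
  (1 <= s <= m)%N /\ exists n : nat, (1 <= n <= k %/ 2)%N /\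
    (s%:R : rat) = ((2 * n * (2 * m + 1))%:R - (k%:R - m%:R)) / (2 * k + 1)%:R.

Definition I22 (k m : nat) (s : nat) : Prop :=
  (1 <= s <= m)%N /\ exists n : nat, (k %/ 2 + 1 <= n <= k)%N /\
    ((2 * m + 1)%:R - s%:R : rat) = ((2 * n * (2 * m + 1))%:R - (k%:R - m%:R)) / (2 * k + 1)%:R.

From mathcomp Require Import all_boot all_order all_algebra.
From mathcomp Require Import zify.
Set Implicit Arguments. Unset Strict Implicit. Unset Printing Implicit Defensive.
Import Order.TTheory GRing.Theory Num.Theory.
Local Open Scope ring_scope.

(* Write k = 2j.  Clearing the denominator 2k+1 and using the identity
   m(2k+1) + k = k(2m+1) + m, each defining equation becomes
   (x + m)(2k+1) = (n + j) 2(2m+1)  (for I11, I12)  or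
   (x - m)(2k+1) = (n - j) 2(2m+1)  (for I21, I22),
   where x = s or x = 2m+1-s.  Since 2k+1 is coprime to 2(2m+1) it divides
   n + j resp. n - j, both of absolute value below 2k+1; so only the second
   case is possible, with n = j and x = m.  This gives s = m in I21, while in
   I22 it forces s = m+1, outside J_m. *)

Lemma natr_sub_div_eq (R : numFieldType) (a b c d K : nat) : (0 < K)%N ->
  (a%:R - b%:R : R) = (c%:R - d%:R) / K%:R -> (a * K + d = c + b * K)%N.
Proof.
move=> K_gt0 /(congr1 ( *%R^~ K%:R)); rewrite divfK ?pnatr_eq0 -?lt0n //.
move/eqP; rewrite mulrBl -!natrM subr_eq addrAC eq_sym subr_eq -!natrD.
by rewrite eqr_nat => /eqP.
Qed.

Lemma coprime_mul_eq_small (K N a b : nat) :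
  coprime K N -> (a * K = b * N)%N -> (b < K)%N -> b = 0%N.
Proof.
move=> coKN eq_ab b_lt; case: (posnP b) => // b_gt0.
have K_dvd_b : (K %| b)%N by rewrite -(Gauss_dvdl _ coKN) -eq_ab dvdn_mull.
by have := dvdn_leq b_gt0 K_dvd_b; rewrite leqNgt b_lt.
Qed.

Section IndexSets.

Variables k m : nat.
Hypothesis k_even : ~~ odd k.
Hypothesis coprime_KM : coprime (2 * k + 1) (2 * (2 * m + 1)).

Lemma k_half : k = (2 * (k %/ 2))%N.
Proof. by rewrite {1}(divn_eq k 2) modn2 (negbTE k_even) addn0 mulnC. Qed.

Fact K_gt0 : (0 < 2 * k + 1)%N.
Proof. by rewrite addn1. Qed.

Lemma plus_offset_eqn_absurd x n : (0 < n <= k)%N ->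
  (x * (2 * k + 1) + m = 2 * n * (2 * m + 1) + k)%N -> False.
Proof.
move=> /andP[n_gt0 n_le] eq_xn; have k2 := k_half.
have eq_shift : ((x + m) * (2 * k + 1) = (n + k %/ 2) * (2 * (2 * m + 1)))%N.
  by nia.
by have := coprime_mul_eq_small coprime_KM eq_shift; lia.
Qed.

Lemma minus_offset_eqn_solution x n : (n <= k)%N ->
  (x * (2 * k + 1) + k = 2 * n * (2 * m + 1) + m)%N -> x = m /\ n = (k %/ 2)%N.
Proof.
move=> n_le eq_xn; have k2 := k_half.
have eq_up : ((x - m) * (2 * k + 1) = (n - k %/ 2) * (2 * (2 * m + 1)))%N.
  by nia.
have eq_down : ((m - x) * (2 * k + 1) = (k %/ 2 - n) * (2 * (2 * m + 1)))%N.
  by nia.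
have := coprime_mul_eq_small coprime_KM eq_up.
have := coprime_mul_eq_small coprime_KM eq_down.
by nia.
Qed.

Lemma I11_empty s : ~ I11 k m s.
Proof.
case=> _ [n [n_range]]; rewrite -natrD -[s%:R]subr0.
move=> /(natr_sub_div_eq (b := 0) K_gt0); rewrite mul0n addn0.
by apply: plus_offset_eqn_absurd; lia.
Qed.

Lemma I12_empty s : ~ I12 k m s.
Proof.
case=> s_range [n [n_range]]; rewrite -natrD.
move=> /(natr_sub_div_eq K_gt0) eq_sn.
by apply: (@plus_offset_eqn_absurd (2 * m + 1 - s) n); nia.
Qed.

Lemma I21_eq s : I21 k m s -> s = m.
Proof.
case=> _ [n [n_range]]; rewrite opprB addrA -natrD -[s%:R]subr0.
move=> /(natr_sub_div_eq (b := 0) K_gt0); rewrite mul0n addn0.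
by case/minus_offset_eqn_solution; lia.
Qed.

Lemma I22_empty s : ~ I22 k m s.
Proof.
case=> s_range [n [n_range]]; rewrite opprB addrA -natrD.
move=> /(natr_sub_div_eq K_gt0) eq_sn.
have [] := @minus_offset_eqn_solution (2 * m + 1 - s) n; nia.
Qed.

Lemma mem_I21 : (0 < m)%N -> (0 < k)%N -> I21 k m m.
Proof.
move=> m_gt0 k_gt0; have k2 := k_half.
split; first lia.
exists (k %/ 2)%N; split; first lia.
apply: (canRL (mulfK _)); first by rewrite pnatr_eq0 -lt0n K_gt0.
have eq_nat : (m * (2 * k + 1) + k = 2 * (k %/ 2) * (2 * m + 1) + m)%N by nia.
by rewrite -natrM opprB addrA -natrD -eq_nat natrD addrK.
Qed.

End IndexSets.

Theorem lemma3p11 (k m : nat) :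
  (m < k)%N -> (k <= 2 * m)%N -> ~~ odd k -> gcdn (2 * k + 1) (2 * (2 * m + 1)) = 1%N ->
  (forall s : nat, I21 k m s <-> s = m) /\
  (forall s : nat, ~ I11 k m s) /\
  (forall s : nat, ~ I12 k m s) /\
  (forall s : nat, ~ I22 k m s).
Proof.
move=> m_lt_k k_le k_even gcd1.
have coKM : coprime (2 * k + 1) (2 * (2 * m + 1)) by apply/eqP.
split; last split; last split.
- move=> s; split=> [|->]; first exact: I21_eq.
  by apply: mem_I21 => //; lia.
- exact: I11_empty.
- exact: I12_empty.
- exact: I22_empty.
Qed.
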